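(* Let $G_n$, $g_n$ and $A_n$ be as defined in the context. Then for all $n\ge2$, $$A_n=G_n+G_{n-1}=g_{n+1}-g_{n-1}.$$
   Context: $H\times K$ denotes the Cartesian product of graphs. $P_n$ is the path with vertex set $\{1,\dots,n\}$ and $C_4$ is the $4$-cycle. A domino tiling of a finite graph is a perfect matching. $G_n$ is the number of domino tilings of $C_4\times P_n$. $g_n$ is the number of domino tilings of the graph obtained from $C_4\times P_n$ by deleting two adjacent vertices of the copy $C_4\times\{1\}$. $A_n=\frac16\big[(3+\sqrt3)(2+\sqrt3)^n+(3-\sqrt3)(2-\sqrt3)^n\big]$, so that $A_1=3$, $A_2=11$, $A_3=41,\dots$ *)

From HB Require Import structures.
From mathcomp Require Import all_boot all_order all_algebra all_field.
Set Implicit Arguments. Unset Strict Implicit. Unset Printing Implicit Defensive.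
Import Order.TTheory GRing.Theory Num.Theory.

Definition cyc4_adj (i i' : 'I_4) : bool :=
  (i.+1 %% 4 == i') || (i'.+1 %% 4 == i).

(* Adjacency in the path P_n; vertex k of P_n (1-based) is the ordinal k-1. *)
Definition path_adj n (j j' : 'I_n) : bool := (j.+1 == j') || (j'.+1 == j).

Definition prod_adj n : rel ('I_4 * 'I_n) := fun x y =>
  ((x.2 == y.2) && cyc4_adj x.1 y.1) || ((x.1 == y.1) && path_adj x.2 y.2).

Definition is_perfect_matching (T : finType) (e : rel T) (S : {set T})
    (M : {set {set T}}) : bool :=
  [forall B in M, exists x, exists y,
      [&& e x y, x \in S, y \in S & B == [set x; y]]] &&
  [forall x in S, #|[set B in M | x \in B]| == 1%N].

(* Number of domino tilings (perfect matchings) of the induced subgraph on S. *)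
Definition num_pm (T : finType) (e : rel T) (S : {set T}) : nat :=
  #|[set M : {set {set T}} | is_perfect_matching e S M]|.

Definition Gtil (n : nat) : nat := num_pm (@prod_adj n) [set: 'I_4 * 'I_n].

(* g_n = number of domino tilings of C_4 x P_n with the two adjacent vertices
   (0,1) and (1,1) of the copy C_4 x {1} deleted (g_0 := 0, unused). *)
Definition gtil (n : nat) : nat :=
  match n with
  | 0 => 0
  | n'.+1 => num_pm (@prod_adj n'.+1)
               (~: [set ((ord0 : 'I_4), (ord0 : 'I_n'.+1));
                        ((inord 1 : 'I_4), (ord0 : 'I_n'.+1))])
  end.

Local Open Scope ring_scope.
Definition Aseq (n : nat) : algC :=
  (((3 + sqrtC 3) * (2 + sqrtC 3) ^+ n + (3 - sqrtC 3) * (2 - sqrtC 3) ^+ n) / 6)%R.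

From HB Require Import structures.
From mathcomp Require Import all_boot all_order all_algebra all_field.
From mathcomp Require Import zify ring.
Set Implicit Arguments. Unset Strict Implicit. Unset Printing Implicit Defensive.
Import GRing.Theory Num.Theory.

(* Count tilings of C_4 x P_m by expanding, at one end, along a vertex of the
   first incomplete layer.  Up to rotating C_4, every region reached is either
   the full prism (x_m = G_m tilings) or the prism whose end layer keeps only
   two adjacent vertices (y_m = g_m tilings), and one finds
     x_(m+2) = 2 x_(m+1) + 4 y_(m+1) + x_m,    y_(m+1) = x_m + y_m.
   Eliminating y, b_m = x_(m+1) + x_m satisfies b_(m+2) = 4 b_(m+1) - b_m, the
   recurrence of (2 + sqrt 3)^m and (2 - sqrt 3)^m, so A_n = G_n + G_(n-1);
   and g_(n+1) - g_(n-1) = y_(n+1) - y_(n-1) = x_n + x_(n-1). *)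

Lemma sum_nat_bool_card (T : finType) (P b : pred T) :
  \sum_(i | P i) (b i : nat) = #|[set i | P i && b i]|.
Proof.
by rewrite -sum1dep_card big_mkcondr /=; apply: eq_bigr => i _; case: (b i).
Qed.

Lemma big_pred_uniq_seq (T : finType) (P : pred T) (r : seq T) (F : T -> nat) :
  uniq r -> (forall i, P i = (i \in r)) -> \sum_(i | P i) F i = \sum_(i <- r) F i.
Proof. by move=> r_uniq Pr; rewrite big_uniq //; apply: eq_bigl. Qed.

Section PerfectMatchings.
Variables (T : finType) (e : rel T).
Hypotheses (e_sym : symmetric e) (e_irr : irreflexive e).

Lemma pm_block S M B : is_perfect_matching e S M -> B \in M ->
  exists u v, [/\ e u v, u \in S, v \in S & B = [set u; v]].
Proof.
case/andP=> /forall_inP pmM _ /pmM /existsP [u /existsP [v]].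
by case/and4P=> euv uS vS /eqP ->; exists u, v.
Qed.

Lemma pm_cover S M x : is_perfect_matching e S M -> x \in S ->
  #|[set B in M | x \in B]| = 1.
Proof. by case/andP=> _ /forall_inP pmS /pmS /eqP. Qed.

Lemma pm_block_uniq S M x B1 B2 : is_perfect_matching e S M -> x \in S ->
  B1 \in M -> B2 \in M -> x \in B1 -> x \in B2 -> B1 = B2.
Proof.
move=> pm xS B1M B2M xB1 xB2; have /eqP/cards1P [C defC] := pm_cover pm xS.
have : B1 \in [set B in M | x \in B] by rewrite inE B1M xB1.
have : B2 \in [set B in M | x \in B] by rewrite inE B2M xB2.
by rewrite defC !inE => /eqP -> /eqP ->.
Qed.

Lemma card_pm_partner S M x : is_perfect_matching e S M -> x \in S ->
  #|[set y | (y \in S) && e x y && ([set x; y] \in M)]| = 1.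
Proof.
move=> pm xS; have /eqP/cards1P [B defB] := pm_cover pm xS.
have : B \in [set B in M | x \in B] by rewrite defB set11.
rewrite inE => /andP [BM xB].
have [y [exy yS defxy]] : exists y, [/\ e x y, y \in S & B = [set x; y]].
  have [u [v [euv uS vS defuv]]] := pm_block pm BM.
  move: xB; rewrite defuv => /set2P [] ->; first by exists v.
  by exists u; rewrite e_sym setUC.
apply/eqP/cards1P; exists y; apply/setP => w; rewrite !inE.
apply/idP/idP=> [/andP [/andP [wS exw] xwM] | /eqP ->]; last first.
  by rewrite yS exy -defxy.
have := pm_block_uniq pm xS xwM BM (set21 _ _) xB; rewrite defxy => xwE.
have : w \in [set x; y] by rewrite -xwE set22.
by case/set2P=> [wx | -> //]; rewrite wx e_irr in exw.
Qed.

Lemma pm_setD2 S M x y : is_perfect_matching e S M -> [set x; y] \in M ->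
  x \in S -> y \in S -> is_perfect_matching e (S :\ x :\ y) (M :\ [set x; y]).
Proof.
move=> pm xyM xS yS.
have xy_only B w : B \in M -> w \in B -> w \in [set x; y] -> B = [set x; y].
  move=> BM wB /set2P [] wE.
    by apply: (pm_block_uniq pm xS) (set21 _ _); rewrite // -wE.
  by apply: (pm_block_uniq pm yS) (set22 _ _); rewrite // -wE.
apply/andP; split.
  apply/forall_inP => B /setD1P [nB BM].
  have [u [v [euv uS vS defB]]] := pm_block pm BM.
  have out w : w \in B -> (w != y) && (w != x).
    move=> wB; apply/andP; split; apply: contraNneq nB => wE;
      by apply/eqP/(xy_only B w); rewrite // wE !inE eqxx ?orbT.
  apply/existsP; exists u; apply/existsP; exists v.
  by rewrite euv defB eqxx !inE uS vS !andbT !out // defB !inE eqxx ?orbT.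
apply/forall_inP => z; rewrite !inE => /and3P [zy zx zS].
suff -> : [set B in M :\ [set x; y] | z \in B] = [set B in M | z \in B].
  by rewrite (pm_cover pm zS).
apply/setP => B; rewrite !inE; case: eqP => //= ->.
by rewrite xyM !inE (negbTE zy) (negbTE zx).
Qed.

Lemma pm_setU2 S M x y : is_perfect_matching e (S :\ x :\ y) M -> e x y ->
  x \in S -> y \in S -> is_perfect_matching e S ([set x; y] |: M).
Proof.
move=> pm exy xS yS.
have in_rest B w : B \in M -> w \in B -> w \in S :\ x :\ y.
  by move=> BM; have [u [v [_ uS vS ->]]] := pm_block pm BM; case/set2P=> ->.
apply/andP; split.
  apply/forall_inP => B; rewrite !inE => /orP [/eqP -> | BM].
    by apply/existsP; exists x; apply/existsP; exists y; rewrite exy xS yS eqxx.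
  have [u [v [euv uS vS defB]]] := pm_block pm BM.
  apply/existsP; exists u; apply/existsP; exists v; rewrite euv defB eqxx andbT.
  by move: uS vS; rewrite !inE => /and3P [_ _ ->] /and3P [_ _ ->].
apply/forall_inP => z zS; have [zxy | zxyN] := boolP (z \in [set x; y]).
  apply/cards1P; exists [set x; y]; apply/setP => B; rewrite !inE.
  apply/idP/eqP=> [/andP [/orP [/eqP // | BM] zB] | ->]; last by rewrite eqxx.
  by move: (in_rest B z BM zB); case/set2P: zxy => ->; rewrite !inE eqxx ?andbF.
have zS' : z \in S :\ x :\ y by move: zxyN; rewrite !inE zS negb_or andbT andbC.
suff -> : [set B in [set x; y] |: M | z \in B] = [set B in M | z \in B].
  by rewrite (pm_cover pm zS').
apply/setP => B; rewrite !inE; case: eqP => //= ->.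
by rewrite (negbTE zxyN) andbF.
Qed.

Lemma pm_setD2_notin S M x y :
  is_perfect_matching e (S :\ x :\ y) M -> [set x; y] \notin M.
Proof.
move=> pm; apply/negP => /(pm_block pm) [u [v [_ uS vS defuv]]].
have : x \in [set u; v] by rewrite -defuv set21.
by case/set2P=> xE; [move: uS | move: vS]; rewrite -xE !inE eqxx andbF.
Qed.

Lemma num_pm_expand (S : {set T}) (x : T) : x \in S ->
  num_pm e S = \sum_(y | (y \in S) && e x y) num_pm e (S :\ x :\ y).
Proof.
move=> xS; rewrite /num_pm; set P := [set M | is_perfect_matching e S M].
have -> : #|P| = \sum_(M in P)
                   \sum_(y | (y \in S) && e x y) ([set x; y] \in M : nat).
  rewrite -sum1_card; apply: eq_bigr => M; rewrite inE => pm.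
  by rewrite sum_nat_bool_card card_pm_partner.
rewrite exchange_big /=; apply: eq_bigr => y /andP [yS exy].
rewrite sum_nat_bool_card.
set Q := [set M | is_perfect_matching e (S :\ x :\ y) M].
have -> : [set M | (M \in P) && ([set x; y] \in M)]
          = [set [set x; y] |: M | M in Q].
  apply/setP => M; rewrite !inE; apply/andP/imsetP.
    by case=> pm xyM; exists (M :\ [set x; y]); rewrite ?setD1K // inE pm_setD2.
  by case=> M' /[!inE] pm ->; rewrite setU11 pm_setU2.
rewrite card_in_imset // => M1 M2 /[!inE] pm1 pm2 M12.
by rewrite -(setU1K (pm_setD2_notin pm1)) M12 setU1K // (pm_setD2_notin pm2).
Qed.

Lemma num_pm_set0 : num_pm e set0 = 1.
Proof.
apply/eqP/cards1P; exists set0; apply/setP => M; rewrite !inE.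
apply/andP/eqP => [[/forall_inP pmM _] | ->]; last first.
  by split; apply/forall_inP => z; rewrite inE.
apply/setP => B; rewrite inE; apply/negP => /pmM /existsP [u /existsP [v]].
by rewrite inE andbF.
Qed.

End PerfectMatchings.

Lemma eq_ordE n (i j : 'I_n) : (i == j) = (i == j :> nat).
Proof. by []. Qed.

Lemma prod_adj_sym n : symmetric (@prod_adj n).
Proof.
case=> [[i Hi] [j Hj]] [[i' Hi'] [j' Hj']].
rewrite /prod_adj /cyc4_adj /path_adj /= !eq_ordE /=; lia.
Qed.

Lemma prod_adj_irr n : irreflexive (@prod_adj n).
Proof.
case=> [[i Hi] [j Hj]]; rewrite /prod_adj /cyc4_adj /path_adj /= !eq_ordE /=.
lia.
Qed.

Definition layer_region N (k : nat) (p q : pred nat) : {set 'I_4 * 'I_N.+1} :=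
  [set v : 'I_4 * 'I_N.+1 | ((v.2 : nat) == k) && p v.1
                             || ((v.2 : nat) == k.+1) && q v.1 || (k.+1 < v.2)].

Definition tilings N k p q := num_pm (@prod_adj N.+1) (layer_region N k p q).
Definition full_tilings N k := tilings N k predT predT.
Definition pair_tilings N k i := tilings N k (pred2 i (i.+1 %% 4)) predT.

Definition vtx N (a b : nat) : 'I_4 * 'I_N.+1 := (inord a, inord b).

Ltac layer_arith :=
  rewrite /layer_region /vtx /prod_adj /cyc4_adj /path_adj /=;
  rewrite ?inE /= ?xpair_eqE ?eq_ordE ?inordK /=; try lia.

Ltac forall_vertex_arith :=
  let a := fresh "a" in let b := fresh "b" in
  let Ha := fresh "Ha" in let Hb := fresh "Hb" in
  case=> [[a Ha] [b Hb]]; layer_arith.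

Ltac region_eq :=
  rewrite /full_tilings /pair_tilings /tilings; congr num_pm; apply/setP;
  forall_vertex_arith.

(* Expand along vertex x, whose neighbours in the region are the list ys. *)
Ltac expand_at x ys :=
  rewrite /full_tilings /pair_tilings /tilings;
  rewrite (num_pm_expand (@prod_adj_sym _) (@prod_adj_irr _) (x := x));
  [ rewrite (@big_pred_uniq_seq _ _ ys);
      [ rewrite !big_cons big_nil ?addn0 | layer_arith
      | forall_vertex_arith ]
  | layer_arith ].

Lemma full_tilings_expand N k : k < N ->
  full_tilings N k = pair_tilings N k 2 + pair_tilings N k 1
    + pair_tilings N k.+1 1 + pair_tilings N k.+1 2 + full_tilings N k.+2.
Proof.
move=> kN.
have -> : full_tilings N k = pair_tilings N k 2 + pair_tilings N k 1
                           + tilings N k (predC1 0) (predC1 0).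
  by expand_at (vtx N 0 k) [:: vtx N 1 k; vtx N 3 k; vtx N 0 k.+1];
     rewrite addnA; congr (_ + _ + _); region_eq.
have -> : tilings N k (predC1 0) (predC1 0)
          = tilings N k (pred1 3) (predC1 0) + tilings N k (pred2 2 3) (pred2 2 3).
  by expand_at (vtx N 1 k) [:: vtx N 2 k; vtx N 1 k.+1]; congr (_ + _); region_eq.
have -> : tilings N k (pred1 3) (predC1 0) = pair_tilings N k.+1 1.
  by expand_at (vtx N 3 k) [:: vtx N 3 k.+1]; region_eq.
have -> : tilings N k (pred2 2 3) (pred2 2 3)
          = pair_tilings N k.+1 2 + tilings N k (pred1 3) (pred1 3).
  by expand_at (vtx N 2 k) [:: vtx N 3 k; vtx N 2 k.+1]; congr (_ + _); region_eq.
have -> : tilings N k (pred1 3) (pred1 3) = full_tilings N k.+2.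
  by expand_at (vtx N 3 k) [:: vtx N 3 k.+1]; region_eq.
by rewrite !addnA.
Qed.

Lemma pair_tilings_expand N k i : k < N -> i < 4 ->
  pair_tilings N k i = full_tilings N k.+1 + pair_tilings N k.+1 (i.+2 %% 4).
Proof.
move=> kN i4.
have -> : pair_tilings N k i
          = full_tilings N k.+1 + tilings N k (pred1 (i.+1 %% 4)) (predC1 i).
  by expand_at (vtx N i k) [:: vtx N (i.+1 %% 4) k; vtx N i k.+1];
     congr (_ + _); region_eq.
congr (_ + _).
by expand_at (vtx N (i.+1 %% 4) k) [:: vtx N (i.+1 %% 4) k.+1]; region_eq.
Qed.

Lemma pair_tilings_last N i : i < 4 -> pair_tilings N N i = 1.
Proof.
move=> i4; expand_at (vtx N i N) [:: vtx N (i.+1 %% 4) N].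
by transitivity (num_pm (@prod_adj N.+1) set0); [region_eq | exact: num_pm_set0].
Qed.

Lemma full_tilings_last N : full_tilings N N = 2.
Proof.
transitivity (pair_tilings N N 2 + pair_tilings N N 1);
  last by rewrite !pair_tilings_last.
by expand_at (vtx N 0 N) [:: vtx N 1 N; vtx N 3 N]; congr (_ + _); region_eq.
Qed.

Lemma full_tilings_beyond N : full_tilings N N.+1 = 1.
Proof.
by transitivity (num_pm (@prod_adj N.+1) set0); [region_eq | exact: num_pm_set0].
Qed.

(* Tilings of the prism on m layers, and of the same prism with two adjacent
   vertices of an end layer deleted. *)
Fixpoint prism_count (m : nat) : nat :=
  match m with
  | 0 => 1
  | 1 => 2
  | (m'.+1 as m1).+1 => 2 * prism_count m1 + 4 * notch_count m1 + prism_count m'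
  end
with notch_count (m : nat) : nat :=
  match m with
  | 0 => 0
  | m'.+1 => prism_count m' + notch_count m'
  end.

Lemma prism_countSS m :
  prism_count m.+2 = 2 * prism_count m.+1 + 4 * notch_count m.+1 + prism_count m.
Proof. by []. Qed.

Lemma notch_countS m : notch_count m.+1 = prism_count m + notch_count m.
Proof. by []. Qed.

Lemma top_layers_tilings N d : d <= N ->
  full_tilings N (N - d) = prism_count d.+1 /\
  forall i, i < 4 -> pair_tilings N (N - d) i = notch_count d.+1.
Proof.
elim/ltn_ind: d => -[_ _ | d IH dN].
  by rewrite subn0 full_tilings_last; split=> // i i4; rewrite pair_tilings_last.
have full2 : full_tilings N (N - d.+1).+2 = prism_count d.
  case: d IH dN => [|d] IH dN.
    by rewrite (_ : (N - 1).+2 = N.+1) ?full_tilings_beyond //; lia.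
  have [<- _] := IH d (leqW (ltnSn d)) (leqW (ltnW dN)).
  by congr full_tilings; lia.
have [IHfull IHpair] := IH d (ltnSn d) (ltnW dN).
rewrite (_ : N - d = (N - d.+1).+1) in IHfull IHpair; last by lia.
have kN : N - d.+1 < N by lia.
move: (N - d.+1) kN IHfull IHpair full2 => k kN IHfull IHpair full2.
split=> [|i i4]; last first.
  by rewrite pair_tilings_expand // IHfull IHpair ?ltn_mod // notch_countS.
rewrite full_tilings_expand // !(pair_tilings_expand (k := k)) //.
by rewrite !IHpair // IHfull full2 prism_countSS; lia.
Qed.

Lemma Gtil_prism_count n : 0 < n -> Gtil n = prism_count n.
Proof.
case: n => // N _; have [<- _] := top_layers_tilings (leqnn N).
by rewrite subnn /Gtil; region_eq.
Qed.

Lemma gtil_notch_count n : 0 < n -> gtil n = notch_count n.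
Proof.
case: n => // N _; have [_ /(_ 2 isT) <-] := top_layers_tilings (leqnn N).
by rewrite subnn /gtil; region_eq.
Qed.

Lemma prism_count_pair_sum_rec m :
  (prism_count m.+3 + prism_count m.+2) + (prism_count m.+1 + prism_count m)
  = 4 * (prism_count m.+2 + prism_count m.+1).
Proof.
have := prism_countSS m.+1; have := notch_countS m.+1; have := prism_countSS m.
lia.
Qed.

Local Open Scope ring_scope.

Lemma eq_linear_rec2 (R : pzSemiRingType) (u v : nat -> R) (c1 c0 : R) :
  u 0%N = v 0%N -> u 1%N = v 1%N ->
  (forall j, u j.+2 = c1 * u j.+1 + c0 * u j) ->
  (forall j, v j.+2 = c1 * v j.+1 + c0 * v j) ->
  forall j, u j = v j.
Proof.
move=> uv0 uv1 urec vrec j.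
suff [] : u j = v j /\ u j.+1 = v j.+1 by [].
by elim: j => [|j [IH0 IH1]]; split; rewrite // urec vrec IH0 IH1.
Qed.

Lemma exprSS_rec (R : comPzRingType) (a c1 c0 : R) j :
  a ^+ 2 = c1 * a + c0 -> a ^+ j.+2 = c1 * a ^+ j.+1 + c0 * a ^+ j.
Proof. by move=> a2; rewrite -addn2 exprD a2 exprS; ring. Qed.

Lemma sqrtC3_sq : sqrtC 3 ^+ 2 = 3 :> algC.
Proof. by rewrite sqrtCK. Qed.

(* 2 + sqrt 3 and 2 - sqrt 3 are the roots of X^2 - 4 X + 1. *)
Lemma Aseq_rec j : Aseq j.+2 = 4 * Aseq j.+1 + (-1) * Aseq j.
Proof.
rewrite /Aseq; set s := sqrtC 3.
have sq2P : (2 + s) ^+ 2 = 4 * (2 + s) + -1 by rewrite sqrrD sqrtC3_sq; ring.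
have sq2M : (2 - s) ^+ 2 = 4 * (2 - s) + -1 by rewrite sqrrB sqrtC3_sq; ring.
by rewrite (exprSS_rec _ sq2P) (exprSS_rec _ sq2M); ring.
Qed.

Lemma Aseq0 : Aseq 0 = 1.
Proof. by rewrite /Aseq !expr0 !mulr1 addrACA subrr addr0 -natrD divff ?pnatr_eq0. Qed.

Lemma Aseq1 : Aseq 1 = 3.
Proof.
rewrite /Aseq !expr1; set s := sqrtC 3.
have -> : (3 + s) * (2 + s) + (3 - s) * (2 - s) = 12 + 2 * s ^+ 2 by ring.
rewrite sqrtC3_sq (_ : 12 + 2 * 3 = 3 * 6); last by ring.
by rewrite mulfK ?pnatr_eq0.
Qed.

Lemma Aseq_prism_count m : Aseq m.+1 = (prism_count m.+1 + prism_count m)%:R.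
Proof.
apply: (@eq_linear_rec2 _ (fun j => Aseq j.+1)
          (fun j => (prism_count j.+1 + prism_count j)%:R) 4 (-1)) => [||j|j].
- by rewrite Aseq1.
- have -> : (prism_count 2 + prism_count 1 = 11)%N by [].
  by rewrite Aseq_rec Aseq1 Aseq0; ring.
- exact: Aseq_rec.
apply: (addIr (prism_count j.+1 + prism_count j)%:R).
by rewrite -natrD prism_count_pair_sum_rec natrM; ring.
Qed.

Theorem mainTheorem3 (n : nat) (hn : (2 <= n)%N) :
  Aseq n = ((Gtil n + Gtil n.-1)%N)%:R /\
  Aseq n = (gtil n.+1)%:R - (gtil n.-1)%:R.
Proof.
case: n hn => [|[|m]] // _.
rewrite !Gtil_prism_count // !gtil_notch_count // Aseq_prism_count.
split=> //.
by rewrite (notch_countS m.+2) (notch_countS m.+1) addnA [in RHS]natrD addrK.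
Qed.
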